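(* Let $\mathbf{X}\subseteq\mathbb{N}^n$ be any set. Then $\mathbf{X}$ is hybridlinear if and only if $(\mathbf{X},\le_{\mathbf{P}_{\mathbf{X}}})$ is a well-quasi-order.
   Context: Hybridlinear: $\mathbf{X}=\mathbf{B}+\mathbb{N}(\mathbf{F})$ with $\mathbf{B},\mathbf{F}\subseteq\mathbb{N}^n$ finite (the empty set counts as hybridlinear). A vector $\mathbf{p}\in\mathbb{Z}^n$ is a preservant of $\mathbf{X}$ if $\mathbf{X}+\mathbf{p}\subseteq\mathbf{X}$; $\mathbf{P}_{\mathbf{X}}$ is the set of preservants. For an $\mathbb{N}$-generated set $\mathbf{P}$, $\mathbf{x}\le_{\mathbf{P}}\mathbf{y}$ iff $\mathbf{y}=\mathbf{x}+\mathbf{p}$ for some $\mathbf{p}\in\mathbf{P}$. A partial order is a well-quasi-order if it is well-founded and every subset has finitely many minimal elements. *)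

From mathcomp Require Import all_boot all_order all_algebra.
Set Implicit Arguments. Unset Strict Implicit. Unset Printing Implicit Defensive.
Import GRing.Theory Num.Theory.

Definition natvec (n : nat) := {ffun 'I_n -> nat}.
Definition intvec (n : nat) := {ffun 'I_n -> int}.

Definition natset (n : nat) := natvec n -> Prop.

(* x \in B + N(F): x = b + sum_j c_j f_j with b in B, c_j in N. *)
Definition in_hybrid (n : nat) (B F : seq (natvec n)) (x : natvec n) : Prop :=
  exists2 b, b \in B &
    exists c : 'I_(size F) -> nat,
      forall i : 'I_n, x i = (b i + \sum_(j < size F) c j * (nth b F j) i)%N.

(* X is hybridlinear: X = B + N(F) for finite B, F (B = [::] gives the empty set). *)
Definition hybridlinear (n : nat) (X : natset n) : Prop :=
  exists B F : seq (natvec n), forall x, X x <-> in_hybrid B F x.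

Definition shift_by (n : nat) (x : natvec n) (p : intvec n) (y : natvec n) : Prop :=
  forall i : 'I_n, ((y i)%:Z = (x i)%:Z + p i)%R.

Definition preservant (n : nat) (X : natset n) (p : intvec n) : Prop :=
  forall x, X x -> exists y, shift_by x p y /\ X y.

Definition le_by (n : nat) (P : intvec n -> Prop) (x y : natvec n) : Prop :=
  exists p, P p /\ shift_by x p y.

Definition wqo_on (T : eqType) (X : T -> Prop) (le : T -> T -> Prop) : Prop :=
  [/\ (forall x, X x -> le x x),
      (forall x y z, X x -> X y -> X z -> le x y -> le y z -> le x z),
      (forall x y, X x -> X y -> le x y -> le y x -> x = y),
      well_founded (fun a b => [/\ X a, X b, le a b & a <> b]) &
      (forall S : T -> Prop, (forall s, S s -> X s) ->
         exists l : seq T, forall m, S m ->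
           (forall s, S s -> le s m -> s = m) -> m \in l)].

From mathcomp Require Import all_boot all_order all_algebra.
From mathcomp Require Import zify boolp.
Set Implicit Arguments. Unset Strict Implicit. Unset Printing Implicit Defensive.
Import Order.TTheory GRing.Theory.
Local Open Scope ring_scope.

(* Natural vectors q with X + q ⊆ X are preservants, and on a nonempty X every
   preservant is such a q, so x ≤_P y means y = x + q for a preservant q of X; the
   coordinate sum then makes ≤_P a well-founded partial order on any X.
   If X = B + N(F), infinitely many distinct minimal elements of a subset would have
   representations b + Σ c_j f_j to which Dickson's lemma applies, giving two of them
   that are ≤_P-comparable.
   Conversely, let (X, ≤_P) be a wqo and x0 ∈ X.  A nonzero preservant q for which
   x0 + q is not minimal in {x0 + q' | q' a nonzero preservant} splits as a sum of two
   nonzero preservants, so every preservant is an N-combination of the finitely many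
   "atoms" F; every x ∈ X lies above a minimal element b of X, whence X = B + N(F)
   with B the minimal elements. *)

Definition minimal (T : Type) (S : T -> Prop) (le : T -> T -> Prop) (m : T) :=
  forall s, S s -> le s m -> s = m.

Definition finitely_many_minimal (T : eqType) (X : T -> Prop) (le : T -> T -> Prop) :=
  forall S, (forall s, S s -> X s) ->
  exists l : seq T, forall m, S m -> minimal S le m -> m \in l.

Lemma minimal_below (T : Type) (X : T -> Prop) (le : T -> T -> Prop) :
  (forall x, X x -> le x x) ->
  (forall x y z, X x -> X y -> X z -> le x y -> le y z -> le x z) ->
  well_founded (fun a b => [/\ X a, X b, le a b & a <> b]) ->
  forall x, X x -> exists2 m, X m /\ minimal X le m & le m x.
Proof.
move=> refl_le trans_le wf_le; elim/(well_founded_ind wf_le) => x IHx Xx.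
have [min_x|/existsNP [s /not_implyP [Xs /not_implyP [le_sx neq_sx]]]] :=
  pselect (minimal X le x); first by exists x; [split | exact: refl_le].
have [m [Xm min_m] le_ms] := IHx s (And4 Xs Xx le_sx neq_sx) Xs.
by exists m => //; exact: trans_le le_ms le_sx.
Qed.

Lemma injective_seq_of_infinite (T : eqType) (P : T -> Prop) :
  ~ (exists l : seq T, forall x, P x -> x \in l) ->
  exists g : nat -> T, injective g /\ forall k, P (g k).
Proof.
move=> infP.
have /choice [f Pf] : forall l : seq T, exists x, P x /\ x \notin l.
  move=> l; apply: contrapT => /forallNP nPl; apply: infP; exists l => x Px.
  by apply: contrapT => /negP xNl; apply: (nPl x).
pose fix L k := if k is k'.+1 then f (L k') :: L k' else [::].
have gL j k : (j < k)%N -> f (L j) \in L k.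
  elim: k => [//|k IHk]; rewrite ltnS leq_eqVlt inE => /orP[/eqP->|/IHk->].
    by rewrite eqxx.
  by rewrite orbT.
exists (fun k => f (L k)); split=> [j k eq_jk|k]; last by case: (Pf (L k)).
have fLk k' : f (L k') \notin L k' by case: (Pf (L k')).
case: (ltngtP j k) => // [/gL|/gL]; first by rewrite eq_jk (negbTE (fLk k)).
by rewrite -eq_jk (negbTE (fLk j)).
Qed.

Lemma infinitely_often_subseq (P : nat -> Prop) :
  (forall a, exists j, (a < j)%N /\ P j) ->
  exists phi : nat -> nat, {homo phi : j k / (j < k)%N} /\ forall k, P (phi k).
Proof.
move=> /choice [f Pf]; pose fix phi k := if k is k'.+1 then f (phi k') else f 0%N.
exists phi; split; last by case=> [|k]; [case: (Pf 0%N) | case: (Pf (phi k))].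
apply: (@homo_ltn _ phi _ ltn_trans) => k; by case: (Pf (phi k)).
Qed.

Lemma nondecreasing_subseq (h : nat -> nat) :
  exists phi : nat -> nat,
    {homo phi : j k / (j < k)%N} /\ {homo h \o phi : j k / (j <= k)%N}.
Proof.
have /choice [f Hf] a : exists j, (a < j)%N /\ forall j', (a < j')%N -> (h j <= h j')%N.
  have exP : exists v, `[< exists j, (a < j)%N /\ h j = v >].
    by exists (h a.+1); apply/asboolP; exists a.+1.
  case: (ex_minnP exP) => v /asboolP [j [lt_aj <-]] min_v.
  by exists j; split=> // j' lt_aj'; apply: min_v; apply/asboolP; exists j'.
pose fix phi k := if k is k'.+1 then f (phi k') else f 0%N.
have phiS k : (phi k < phi k.+1)%N by case: (Hf (phi k)).
exists phi; split; first exact: homo_ltn ltn_trans phiS.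
(* [phi k] minimizes [h] beyond [phi k.-1], and [phi k.+1] lies beyond [phi k]. *)
apply: (homo_leq leqnn leq_trans) => -[|k].
  by apply: (proj2 (Hf 0%N)); apply: ltn_trans (phiS 0%N); case: (Hf 0%N).
by apply: (proj2 (Hf (phi k))); apply: ltn_trans (phiS k.+1); case: (Hf (phi k)).
Qed.

Lemma dickson_subseq K (c : nat -> 'I_K -> nat) :
  exists phi : nat -> nat, {homo phi : j k / (j < k)%N} /\
    forall i, {homo (fun k => c (phi k) i) : j k / (j <= k)%N}.
Proof.
suff [phi [phi_incr c_mono]] : exists phi : nat -> nat, {homo phi : j k / (j < k)%N} /\
    forall i, i \in enum 'I_K -> {homo (fun k => c (phi k) i) : j k / (j <= k)%N}.
  by exists phi; split=> // i; apply: c_mono; rewrite mem_enum.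
elim: (enum 'I_K) => [|i0 s [phi [phi_incr c_mono]]]; first by exists id; split.
have [psi [psi_incr h_mono]] := nondecreasing_subseq (fun k => c (phi k) i0).
exists (phi \o psi); split=> [j k lt_jk|i]; first exact/phi_incr/psi_incr.
rewrite inE => /orP[/eqP-> //|/c_mono mono_i] j k le_jk.
exact/mono_i/(ltnW_homo psi_incr).
Qed.

Lemma infinitely_often_value (T : eqType) (B : seq T) (b : nat -> T) :
  (forall k, b k \in B) -> exists v, forall a, exists j, (a < j)%N /\ b j = v.
Proof.
move=> bB; apply: contrapT => /forallNP fin.
have /choice [a Ha] v : exists a, forall j, (a < j)%N -> b j <> v.
  have /existsNP [a Ha] := fin v.
  by exists a => j lt_aj bj; apply: Ha; exists j.
pose A := (\max_(v <- B) a v)%N.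
apply: (Ha (b A.+1) A.+1) => //; rewrite ltnS.
exact: (leq_bigmax_seq (P := predT)) (bB A.+1) _.
Qed.

Lemma dickson (T : eqType) (B : seq T) K (b : nat -> T) (c : nat -> 'I_K -> nat) :
  (forall k, b k \in B) ->
  exists j k, [/\ (j < k)%N, b j = b k & forall i, (c j i <= c k i)%N].
Proof.
move=> /infinitely_often_value [v /infinitely_often_subseq [phi [phi_incr b_phi]]].
have [psi [psi_incr c_mono]] := dickson_subseq (fun k => c (phi k)).
exists (phi (psi 0%N)), (phi (psi 1%N)); split; first exact/phi_incr/psi_incr.
  by rewrite !b_phi.
by move=> i; apply: c_mono.
Qed.


Section Vectors.
Variable n : nat.
Implicit Types (x y z q : natvec n) (p : intvec n) (F : seq (natvec n)).

Definition intvec_of q : intvec n := [ffun i => (q i)%:Z].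

Definition weight x := (\sum_i x i)%N.

Definition ncomb (F : seq (natvec n)) (c : 'I_(size F) -> nat) : natvec n :=
  \sum_(j < size F) F`_j *+ c j.
Arguments ncomb : clear implicits.

Lemma shift_by_inj x p y z : shift_by x p y -> shift_by x p z -> y = z.
Proof. by move=> Hy Hz; apply/ffunP=> i; have := Hy i; rewrite -Hz => -[]. Qed.

Lemma shift_by0 x : shift_by x 0 x.
Proof. by move=> i; rewrite ffunE addr0. Qed.

Lemma shift_byD x y z p p' :
  shift_by x p y -> shift_by y p' z -> shift_by x (p + p') z.
Proof. by move=> Hxy Hyz i; rewrite Hyz Hxy ffunE addrA. Qed.

Lemma shift_by_intvec_of x q : shift_by x (intvec_of q) (x + q).
Proof. by move=> i; rewrite !ffunE. Qed.

Lemma shift_by_nonneg x p y :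
  (forall i, 0 <= p i) -> shift_by x p y -> exists2 q, p = intvec_of q & y = x + q.
Proof.
move=> p_ge0 Hy; exists [ffun i => `|p i|%N].
  by apply/ffunP=> i; rewrite !ffunE gez0_abs.
apply/ffunP=> i; have := Hy i; rewrite -{1}(gez0_abs (p_ge0 i)) -PoszD => -[->].
by rewrite !ffunE.
Qed.

Lemma addvI x y z : x + y = x + z -> y = z.
Proof. by move/ffunP=> E; apply/ffunP=> i; have := E i; rewrite !ffunE; exact: addnI. Qed.

Lemma weightD x y : weight (x + y) = (weight x + weight y)%N.
Proof. by rewrite /weight -big_split; apply: eq_bigr => i _; rewrite ffunE. Qed.

Lemma weight_gt0 x : x != 0 -> (0 < weight x)%N.
Proof.
apply: contraNT; rewrite -eqn0Ngt sum_nat_eq0 => /forallP x0.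
by apply/eqP/ffunP=> i; rewrite ffunE; apply/eqP; exact: x0.
Qed.

Lemma ncombE F (c : 'I_(size F) -> nat) i :
  ncomb F c i = (\sum_(j < size F) c j * nth 0%R F j i)%N.
Proof.
rewrite /ncomb sum_ffunE; apply: eq_bigr => j _.
by rewrite ffunMnE -mulr_natr natn mulnC.
Qed.

Lemma ncomb0 F : ncomb F (fun=> 0%N) = 0.
Proof. by rewrite /ncomb big1 // => j _; rewrite mulr0n. Qed.

Lemma ncombD F (c d : 'I_(size F) -> nat) :
  ncomb F (fun j => c j + d j)%N = ncomb F c + ncomb F d.
Proof. by rewrite /ncomb -big_split; apply: eq_bigr => j _; rewrite mulrnDr. Qed.

Lemma ncomb_delta F (j : 'I_(size F)) : ncomb F (fun k => (k == j) : nat) = F`_j.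
Proof.
rewrite /ncomb (bigD1 j) //= eqxx mulr1n big1 ?addr0 // => k /negbTE->.
by rewrite mulr0n.
Qed.

Lemma in_hybridP B F x :
  in_hybrid B F x <-> exists2 b, b \in B & exists c, x = b + ncomb F c.
Proof.
have E (b : natvec n) (c : 'I_(size F) -> nat) :
    (forall i, x i = b i + \sum_(j < size F) c j * nth b F j i)%N <->
    x = b + ncomb F c.
  have Hc i : ncomb F c i = (\sum_(j < size F) c j * nth b F j i)%N.
    by rewrite ncombE; apply: eq_bigr => j _; rewrite (set_nth_default b).
  by split=> [Hx|-> i]; [apply/ffunP=> i; rewrite ffunE Hx Hc | rewrite ffunE Hc].
by split=> -[b Bb [c Hc]]; exists b => //; exists c; apply/E.
Qed.

End Vectors.
Arguments ncomb {n} F c.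

Section Preservants.
Variables (n : nat) (X : natset n).
Implicit Types (x y z q : natvec n) (p : intvec n).
Local Notation le := (le_by (preservant X)).

Lemma preservant0 : preservant X 0.
Proof. by move=> x Xx; exists x; split=> //; exact: shift_by0. Qed.

Lemma preservantD p p' : preservant X p -> preservant X p' -> preservant X (p + p').
Proof.
move=> Pp Pp' x Xx; have [y [Hy Xy]] := Pp x Xx; have [z [Hz Xz]] := Pp' y Xy.
by exists z; split=> //; exact: shift_byD Hz.
Qed.

Lemma preservantMn p k : preservant X p -> preservant X (p *+ k).
Proof.
move=> Pp; elim: k => [|k IHk]; first exact: preservant0.
by rewrite mulrS; exact: preservantD.
Qed.

(* Iterating a preservant with a negative coordinate would leave N^n. *)
Lemma preservant_ge0 p x : preservant X p -> X x -> forall i, 0 <= p i.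
Proof.
move=> Pp Xx i; rewrite leNgt; apply/negP=> p_lt0.
have [y [Hy _]] := preservantMn (x i).+1 Pp Xx.
have := Hy i; rewrite ffunMnE -mulr_natr natz.
by move: (p i) (x i) (y i) p_lt0 => a b c; nia.
Qed.

Lemma preservant_natP q : preservant X (intvec_of q) <-> forall x, X x -> X (x + q).
Proof.
split=> [Pq x Xx | Xq x Xx].
  by have [y [Hy Xy]] := Pq x Xx; rewrite (shift_by_inj (shift_by_intvec_of x q) Hy).
by exists (x + q); split; [exact: shift_by_intvec_of | exact: Xq].
Qed.

Lemma preservant_ncomb F (c : 'I_(size F) -> nat) :
  (forall f, f \in F -> preservant X (intvec_of f)) -> preservant X (intvec_of (ncomb F c)).
Proof.
move=> PF; apply/preservant_natP; rewrite /ncomb.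
apply: (big_ind (fun q => forall x, X x -> X (x + q))) => [x|q q' Pq Pq' x Xx|j _].
- by rewrite addr0.
- by rewrite addrA; apply: Pq'; apply: Pq.
have /preservant_natP XFj := PF _ (mem_nth 0 (ltn_ord j)).
elim: (c j) => [x|k IHk x Xx]; first by rewrite mulr0n addr0.
by rewrite mulrS addrA; apply/IHk/XFj.
Qed.

Lemma le_by_preservantP x y :
  X x -> le x y <-> exists2 q, preservant X (intvec_of q) & y = x + q.
Proof.
move=> Xx; split=> [[p [Pp Hy]] | [q Pq ->]]; last first.
  by exists (intvec_of q); split=> //; exact: shift_by_intvec_of.
have [q Ep ->] := shift_by_nonneg (preservant_ge0 Pp Xx) Hy.
by exists q; rewrite -?Ep.
Qed.

Lemma le_by_preservant_mem x y : X x -> le x y -> X y.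
Proof. by move=> Xx /(le_by_preservantP _ Xx) [q /preservant_natP Pq ->]; exact: Pq. Qed.

Lemma le_by_preservant_refl x : le x x.
Proof. by exists 0; split; [exact: preservant0 | exact: shift_by0]. Qed.

Lemma le_by_preservant_trans x y z : le x y -> le y z -> le x z.
Proof.
move=> [p [Pp Hxy]] [p' [Pp' Hyz]]; exists (p + p'); split.
  exact: preservantD.
exact: shift_byD Hyz.
Qed.

Lemma le_by_preservant_weight x y : X x -> le x y -> x <> y -> (weight x < weight y)%N.
Proof.
move=> Xx /(le_by_preservantP _ Xx) [q _ ->] neq_xy.
rewrite weightD -addn1 leq_add2l weight_gt0 //.
by apply: contra_not_neq neq_xy => ->; rewrite addr0.
Qed.

Lemma le_by_preservant_anti x y : X x -> le x y -> le y x -> x = y.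
Proof.
move=> Xx Hxy Hyx; apply: contrapT => neq_xy.
have Xy := le_by_preservant_mem Xx Hxy.
have := ltn_trans (le_by_preservant_weight Xx Hxy neq_xy).
by move/(_ _ (le_by_preservant_weight Xy Hyx (nesym neq_xy))); rewrite ltnn.
Qed.

Lemma le_by_preservant_wf : well_founded (fun a b => [/\ X a, X b, le a b & a <> b]).
Proof.
apply: (Wf_nat.well_founded_lt_compat _ (@weight n)) => a b [Xa _ Hab neq_ab].
exact/ssrnat.ltP/le_by_preservant_weight.
Qed.

End Preservants.

Lemma in_hybrid_preservant_ncomb n (B F : seq (natvec n)) (d : 'I_(size F) -> nat) :
  preservant (in_hybrid B F) (intvec_of (ncomb F d)).
Proof.
apply/preservant_natP => x /in_hybridP [b Bb [c ->]]; apply/in_hybridP.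
by exists b => //; exists (fun j => c j + d j)%N; rewrite ncombD addrA.
Qed.

Lemma hybridlinear_minimal_finite n (X : natset n) :
  hybridlinear X -> finitely_many_minimal X (le_by (preservant X)).
Proof.
move=> [B [F HX]]; have -> : X = in_hybrid B F by apply/funext=> x; apply/propext.
move=> S SX; apply: contrapT => finN.
pose P m := S m /\ minimal S (le_by (preservant (in_hybrid B F))) m.
have [g [g_inj Pg]] : exists g : nat -> natvec n, injective g /\ forall k, P (g k).
  apply: injective_seq_of_infinite => -[l Hl]; apply: finN.
  by exists l => m Sm /(conj Sm)/Hl.
have /choice [r Hr] k : exists r : natvec n * ('I_(size F) -> nat),
    r.1 \in B /\ g k = r.1 + ncomb F r.2.
  by have /in_hybridP [b Bb [c ->]] := SX _ (Pg k).1; exists (b, c).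
have [j [k [lt_jk eq_b le_c]]] :=
  dickson (fun k => (r k).2) (fun k => (Hr k).1).
have le_gjk : le_by (preservant (in_hybrid B F)) (g j) (g k).
  apply/le_by_preservantP; first exact: SX (Pg j).1.
  exists (ncomb F (fun i => (r k).2 i - (r j).2 i)%N).
    exact: in_hybrid_preservant_ncomb.
  rewrite (Hr k).2 (Hr j).2 -addrA -ncombD eq_b; congr (_ + ncomb F _).
  by apply: funext => i; rewrite subnKC.
have /g_inj eq_jk := (Pg k).2 _ (Pg j).1 le_gjk.
by rewrite eq_jk ltnn in lt_jk.
Qed.

Lemma ncomb_of_atoms n (Q : natvec n -> Prop) (F : seq (natvec n)) :
  (forall q, Q q -> q != 0 -> q \in F \/
     exists q1 q2, [/\ Q q1, Q q2, q1 != 0, q2 != 0 & q = q1 + q2]) ->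
  forall q, Q q -> exists c, q = ncomb F c.
Proof.
move=> atoms q; have [w] := ubnP (weight q); elim: w q => // w IHw q lt_qw Qq.
have [->|q0] := eqVneq q 0; first by exists (fun=> 0%N); rewrite ncomb0.
case: (atoms q Qq q0) => [qF | [q1 [q2 [Qq1 Qq2 q10 q20 Eq]]]].
  have lt_qF : (index q F < size F)%N by rewrite index_mem.
  by exists (fun j => (j == Ordinal lt_qF) : nat); rewrite ncomb_delta /= nth_index.
have lt_q1w : (weight q1 < w)%N.
  by move: lt_qw (weight_gt0 q20); rewrite Eq weightD; lia.
have lt_q2w : (weight q2 < w)%N.
  by move: lt_qw (weight_gt0 q10); rewrite Eq weightD; lia.
rewrite Eq; have [c1 ->] := IHw q1 lt_q1w Qq1; have [c2 ->] := IHw q2 lt_q2w Qq2.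
by exists (fun j => c1 j + c2 j)%N; rewrite ncombD.
Qed.

Lemma preservant_generators n (X : natset n) x0 :
  X x0 -> finitely_many_minimal X (le_by (preservant X)) ->
  exists F : seq (natvec n), (forall f, f \in F -> preservant X (intvec_of f)) /\
    forall q, preservant X (intvec_of q) -> exists c, q = ncomb F c.
Proof.
move=> Xx0 fin.
pose S m := exists q, [/\ preservant X (intvec_of q), q != 0 & m = x0 + q].
have SX s : S s -> X s by case=> q [/preservant_natP Pq _ ->]; exact: Pq.
have [l min_l] := fin S SX.
pose F := [seq f : natvec n <- [seq [ffun i => (m i - x0 i)%N] | m : natvec n <- l]
  | `[< preservant X (intvec_of f) >]].
exists F; split=> [f|]; first by rewrite mem_filter => /andP[/asboolP].
apply: ncomb_of_atoms => q Pq q0.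
have [min_q|] := pselect (minimal S (le_by (preservant X)) (x0 + q)).
  left; rewrite mem_filter; apply/andP; split; first exact/asboolP.
  have -> : q = [ffun i => ((x0 + q)%R i - x0 i)%N] by apply/ffunP=> i; rewrite !ffunE addKn.
  by apply: map_f; apply: min_l => //; exists q.
move=> /existsNP [_ /not_implyP [[q1 [Pq1 q10 ->]] /not_implyP [le_q1q neq_q1q]]].
have [q2 Pq2 Eq] := (le_by_preservantP _ (SX _ (ex_intro _ q1 (And3 Pq1 q10 erefl)))).1 le_q1q.
right; exists q1, q2; split=> //; last by apply: (@addvI _ x0); rewrite addrA.
by apply: contra_not_neq neq_q1q => q20; rewrite Eq q20 addr0.
Qed.

Lemma hybridlinear_of_wqo n (X : natset n) :
  wqo_on X (le_by (preservant X)) -> hybridlinear X.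
Proof.
case=> refl_le trans_le _ wf_le fin.
have [[x0 Xx0]|noX] := pselect (exists x, X x); last first.
  exists [::], [::] => x; split=> [Xx|/in_hybridP [b]]; last by rewrite in_nil.
  by case: noX; exists x.
have [F [PF genF]] := preservant_generators Xx0 fin.
have [l min_l] := fin X (fun _ => id).
exists [seq b <- l | `[< X b >]], F => x; split=> [Xx|].
  have [m [Xm min_m] le_mx] := minimal_below refl_le trans_le wf_le Xx.
  have [q Pq ->] := (le_by_preservantP _ Xm).1 le_mx.
  have [c ->] := genF q Pq.
  apply/in_hybridP; exists m; last by exists c.
  by rewrite mem_filter min_l // andbT; apply/asboolP.
move=> /in_hybridP [b]; rewrite mem_filter => /andP[/asboolP Xb _] [c ->].
exact: (iffLR (preservant_natP _ _) (preservant_ncomb c PF)).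
Qed.

Theorem mainTheorem14 (n : nat) (X : natset n) :
  hybridlinear X <-> wqo_on X (le_by (preservant X)).
Proof.
split=> [hlX|]; last exact: hybridlinear_of_wqo.
split.
- by move=> x _; exact: le_by_preservant_refl.
- by move=> x y z _ _ _; exact: le_by_preservant_trans.
- by move=> x y Xx _; exact: le_by_preservant_anti.
- exact: le_by_preservant_wf.
- exact: hybridlinear_minimal_finite.
Qed.
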